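(* Let $I$ be a compact segment and let $G\subset \mathrm{Diff}^1_+(I)$ be a group. The following two properties are equivalent: (i) there is a path $(h_t)_{t\in[0,1)}$ of diffeomorphisms $h_t\in \mathrm{Diff}^1_+(I)$, continuous for the $C^1$-topology, such that for every $g\in G$, $h_t g h_t^{-1}$ tends to the identity in the $C^1$-topology as $t\to 1$; (ii) there is a sequence $(h_n)_{n\in\mathbb N}$ of diffeomorphisms $h_n\in \mathrm{Diff}^1_+(I)$ such that for every $g\in G$, $h_n g h_n^{-1}$ tends to the identity in the $C^1$-topology as $n\to+\infty$.
   Context: $\mathrm{Diff}^1_+(I)$ denotes the group of orientation preserving $C^1$-diffeomorphisms of the segment $I$, endowed with the $C^1$-topology. *)

From Stdlib Require Import Reals.
Open Scope R_scope.

(* The compact segment I = [a,b], a < b.  Maps are modelled as R -> R;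
   only their values on I matter. *)
Definition in_I (a b x : R) : Prop := a <= x <= b.

Definition deriv_on (a b : R) (f df : R -> R) : Prop :=
  forall x, in_I a b x ->
    limit1_in (fun y => (f y - f x) / (y - x))
              (fun y => in_I a b y /\ y <> x) (df x) x.

Definition C1_on (a b : R) (f : R -> R) : Prop :=
  exists df, deriv_on a b f df /\
    forall x, in_I a b x -> limit1_in df (in_I a b) (df x) x.

Definition inverse_on (a b : R) (f finv : R -> R) : Prop :=
  forall x, in_I a b x ->
    in_I a b (f x) /\ in_I a b (finv x) /\ f (finv x) = x /\ finv (f x) = x.

Definition Diff1p (a b : R) (f : R -> R) : Prop :=
  (exists finv, inverse_on a b f finv /\ C1_on a b f /\ C1_on a b finv) /\
  (forall x y, in_I a b x -> in_I a b y -> x < y -> f x < f y).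

(* f and g are eps-close in the C^1 distance sup|f-g| + sup|f'-g'|
   (componentwise version; derivatives are unique on I). *)
Definition C1_close (a b : R) (f g : R -> R) (eps : R) : Prop :=
  forall df dg, deriv_on a b f df -> deriv_on a b g dg ->
    forall x, in_I a b x -> Rabs (f x - g x) < eps /\ Rabs (df x - dg x) < eps.

(* G is a subgroup of Diff^1_+(I) (group elements identified up to
   agreement on I). *)
Definition subgroup_Diff1p (a b : R) (G : (R -> R) -> Prop) : Prop :=
  (forall g, G g -> Diff1p a b g) /\
  G (fun x => x) /\
  (forall g1 g2, G g1 -> G g2 -> G (fun x => g1 (g2 x))) /\
  (forall g, G g -> exists g', G g' /\ inverse_on a b g g').

From Stdlib Require Import Reals Lra Lia ZArith ClassicalEpsilon.
From Coquelicot Require Derive.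
Open Scope R_scope.

(* (i) => (ii): sample the path at t_n = 1 - 1/(n+1).
   (ii) => (i): reparametrise [0,1) by r = t/(1-t) in [0,+oo) and interpolate
   linearly, h_r = (1-s) h_n + s h_(n+1) with n = floor r and s = r - n.
   Three facts make this work.
   - A convex combination of two elements of Diff^1_+(I) is again one: it is
     C^1 with positive derivative and fixes a and b, hence a bijection of I
     whose inverse is C^1 (inverse function theorem on I).
   - The C^1-distance from h g h^-1 to the identity is controlled, via the
     mean value theorem, by two inequalities on h and g alone:
       |h(g u) - h u| <= e,  |(h(g v) - h(g u)) - (h v - h u)| <= e |h v - h u|.
     Both survive convex combinations of increasing maps h, since all the
     increments h v - h u then have the same sign.
   - r |-> h_r is locally Lipschitz for the C^1 distance, with constants
     given by the C^1 sizes of the differences h_(n+1) - h_n.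
   The file develops limits and derivatives on I, the elementary theory of
   Diff^1_+(I), convex combinations, the conjugation estimates, the
   piecewise linear path, and finally the theorem. *)

Lemma limit1_in_eps f D l x :
  limit1_in f D l x <-> forall eps, eps > 0 -> exists alp, alp > 0 /\
     forall y, D y -> Rabs (y - x) < alp -> Rabs (f y - l) < eps.
Proof.
  unfold limit1_in, limit_in; simpl; unfold Rdist; split.
  - intros H eps He; destruct (H eps He) as [alp [Ha H']]; exists alp; split; auto.
  - intros H eps He; destruct (H eps He) as [alp [Ha H']]; exists alp; split; auto.
    intros y [Dy Hy]; auto.
Qed.

Lemma limit1_in_ext f g D l x :
  (forall y, D y -> f y = g y) -> limit1_in f D l x -> limit1_in g D l x.
Proof.
  intros E H; rewrite limit1_in_eps in H |- *; intros eps He.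
  destruct (H eps He) as [alp [Ha H']]; exists alp; split; auto.
  intros y Dy Hy; rewrite <- E; auto.
Qed.

Lemma limit1_in_subdomain f D D' l x :
  (forall y, D' y -> D y) -> limit1_in f D l x -> limit1_in f D' l x.
Proof.
  intros E H; rewrite limit1_in_eps in H |- *; intros eps He.
  destruct (H eps He) as [alp [Ha H']]; exists alp; split; auto.
Qed.

Lemma limit1_in_lower f D l x c :
  (forall y, D y -> c <= f y) -> adhDa D x -> limit1_in f D l x -> c <= l.
Proof.
  intros Hc Ha H; destruct (Rle_or_lt c l) as [|Hl]; auto.
  rewrite limit1_in_eps in H; destruct (H (c - l)) as [alp [Hal H']]; [lra|].
  destruct (Ha alp Hal) as [y [Dy Hy]]; unfold Rdist in Hy.
  specialize (H' y Dy Hy); specialize (Hc y Dy).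
  apply Rabs_def2 in H'; lra.
Qed.

Lemma limit1_in_upper f D l x c :
  (forall y, D y -> f y <= c) -> adhDa D x -> limit1_in f D l x -> l <= c.
Proof.
  intros Hc Ha H.
  assert (-c <= -l); [|lra].
  apply (limit1_in_lower (fun y => - f y) D (-l) x); auto.
  - intros y Dy; specialize (Hc y Dy); lra.
  - apply limit_Ropp; auto.
Qed.

Definition convex_comb (f g : R -> R) (l : R) : R -> R :=
  fun x => f x + l * (g x - f x).

Lemma convex_comb_pos x y l : 0 < x -> 0 < y -> 0 <= l <= 1 -> 0 < x + l * (y - x).
Proof. intros; nra. Qed.

Section Segment.
Variables a b : R.
Hypothesis hab : a < b.
Notation I := (in_I a b).

Definition punctured (x : R) : R -> Prop := fun y => I y /\ y <> x.

Definition cont_on (f : R -> R) : Prop := forall x, I x -> limit1_in f I (f x) x.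

Definition increasing_on (f : R -> R) : Prop :=
  forall x y, I x -> I y -> x < y -> f x < f y.

Lemma adh_punctured x : I x -> adhDa (punctured x) x.
Proof.
  intros [H1 H2] alp Ha; unfold punctured, in_I, Rdist.
  destruct (Rlt_or_le x b) as [Hx|Hx].
  - exists (x + Rmin alp (b - x) / 2).
    assert (0 < Rmin alp (b-x)) by (apply Rmin_pos; lra).
    assert (Rmin alp (b-x) <= alp) by apply Rmin_l.
    assert (Rmin alp (b-x) <= b - x) by apply Rmin_r.
    split; [split; [split|]|]; try lra.
    rewrite Rabs_right; lra.
  - exists (x - Rmin alp (b - a) / 2).
    assert (0 < Rmin alp (b-a)) by (apply Rmin_pos; lra).
    assert (Rmin alp (b-a) <= alp) by apply Rmin_l.
    assert (Rmin alp (b-a) <= b - a) by apply Rmin_r.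
    split; [split; [split|]|]; try lra.
    rewrite Rabs_left; lra.
Qed.

(* Derivatives on I are unique (which is why C1_close may quantify over them). *)
Lemma deriv_unique F d1 d2 : deriv_on a b F d1 -> deriv_on a b F d2 ->
  forall x, I x -> d1 x = d2 x.
Proof.
  intros H1 H2 x Hx; eapply single_limit; [| apply H1 | apply H2]; auto.
  apply adh_punctured; auto.
Qed.

Lemma deriv_ext F F' d :
  (forall x, I x -> F x = F' x) -> deriv_on a b F d -> deriv_on a b F' d.
Proof.
  intros E H x Hx; eapply limit1_in_ext; [|apply H; auto].
  intros y [Hy _]; simpl; rewrite !E; auto.
Qed.

Lemma deriv_id : deriv_on a b (fun x => x) (fun _ => 1).
Proof.
  intros x Hx; eapply limit1_in_ext; [| apply (limit_free (fun _ => 1) _ 0)].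
  intros y [Hy Hne]; simpl; field; intro E; apply Hne; lra.
Qed.

Lemma deriv_continuous F d : deriv_on a b F d -> cont_on F.
Proof.
  intros H x Hx.
  assert (L : limit1_in (fun y => F x + (F y - F x) / (y - x) * (y - x)) (punctured x)
                (F x + d x * 0) x).
  { apply limit_plus; [apply (limit_free (fun _ => F x) _ 0)|].
    apply limit_mul; [apply H; auto|].
    rewrite limit1_in_eps; intros eps He; exists eps; split; auto; intros y _ Hy.
    rewrite Rminus_0_r; auto. }
  rewrite Rmult_0_r, Rplus_0_r in L.
  rewrite limit1_in_eps in L |- *; intros eps He; destruct (L eps He) as [alp [Ha H']].
  exists alp; split; auto; intros y Hy Hyx.
  destruct (Req_dec y x) as [->|Hne].
  - rewrite Rminus_diag, Rabs_R0; auto.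
  - specialize (H' y (conj Hy Hne) Hyx).
    replace (F y) with (F x + (F y - F x) / (y - x) * (y - x)); auto.
    field; intro E; apply Hne; lra.
Qed.

Lemma deriv_comp f g df dg : deriv_on a b g dg -> deriv_on a b f df ->
  (forall x, I x -> I (g x)) -> (forall x y, I x -> I y -> g x = g y -> x = y) ->
  deriv_on a b (fun x => f (g x)) (fun x => df (g x) * dg x).
Proof.
  intros Hg Hf Hm Hi x Hx.
  assert (L1 : limit1_in (fun y => (f (g y) - f (g x)) / (g y - g x)) (punctured x)
                 (df (g x)) x).
  { assert (C : limit1_in g (punctured x) (g x) x).
    { apply (limit1_in_subdomain _ I); [intros y [Hy _]; auto|].
      apply (deriv_continuous g dg); auto. }
    pose proof (limit_comp g (fun z => (f z - f (g x)) / (z - g x)) (punctured x)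
      (punctured (g x)) _ _ x C (Hf (g x) (Hm x Hx))) as L.
    eapply limit1_in_subdomain; [| exact L].
    intros y [Hy Hne]; split; [split; auto|].
    split; [apply Hm; auto| intro E; apply Hne; apply Hi; auto]. }
  pose proof (limit_mul _ _ _ _ _ _ L1 (Hg x Hx)) as L.
  eapply limit1_in_ext; [| exact L].
  intros y [Hy Hne]; simpl.
  assert (g y <> g x) by (intro E; apply Hne; apply Hi; auto).
  field; split; intro E; [apply Hne|apply H]; lra.
Qed.

Lemma deriv_convex_comb f g df dg l : deriv_on a b f df -> deriv_on a b g dg ->
  deriv_on a b (convex_comb f g l) (convex_comb df dg l).
Proof.
  intros Hf Hg x Hx; unfold convex_comb.
  pose proof (limit_plus _ _ _ _ _ _ (Hf x Hx)
     (limit_mul _ _ _ _ _ _ (limit_free (fun _ => l) (punctured x) 0 x)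
        (limit_minus _ _ _ _ _ _ (Hg x Hx) (Hf x Hx)))) as L.
  eapply limit1_in_ext; [| exact L].
  intros y [Hy Hne]; simpl; field; intro E; apply Hne; lra.
Qed.

Lemma cont_convex_comb f g l : cont_on f -> cont_on g -> cont_on (convex_comb f g l).
Proof.
  intros Hf Hg x Hx; unfold convex_comb.
  apply limit_plus; auto; apply limit_mul; [apply (limit_free (fun _ => l) _ 0)|].
  apply limit_minus; auto.
Qed.

(* The retraction of R onto I, used to transport results about functions
   continuous on R (IVT, extreme values, MVT) to functions given on I. *)
Definition clamp (x : R) : R := Rmax a (Rmin b x).

Lemma clamp_I x : I (clamp x).
Proof. unfold clamp, in_I, Rmax, Rmin; repeat destruct Rle_dec; lra. Qed.

Lemma clamp_id x : I x -> clamp x = x.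
Proof. unfold clamp, in_I, Rmax, Rmin; intros; repeat destruct Rle_dec; lra. Qed.

Lemma clamp_lipschitz u v : Rabs (clamp u - clamp v) <= Rabs (u - v).
Proof. unfold clamp, Rmax, Rmin; repeat destruct Rle_dec; split_Rabs; lra. Qed.

Lemma continuity_clamp F : cont_on F -> forall x, continuity_pt (fun u => F (clamp u)) x.
Proof.
  intros H x; unfold continuity_pt, continue_in; rewrite limit1_in_eps; intros eps He.
  pose proof (H (clamp x) (clamp_I x)) as Hc; rewrite limit1_in_eps in Hc.
  destruct (Hc eps He) as [alp [Ha H']]; exists alp; split; auto.
  intros y _ Hy; apply H'; [apply clamp_I|].
  eapply Rle_lt_trans; [apply clamp_lipschitz|]; auto.
Qed.

Lemma mvt_I F d y z : deriv_on a b F d -> I y -> I z -> y < z ->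
  exists c, I c /\ F z - F y = d c * (z - y).
Proof.
  intros H Hy Hz Hyz.
  destruct (Derive.MVT_gen (fun u => F (clamp u)) y z d) as [c [Hc E]].
  - intros x Hx; rewrite Rmin_left in Hx by lra; rewrite Rmax_right in Hx by lra.
    apply Derive.is_derive_Reals.
    destruct Hy, Hz.
    intros eps He.
    pose proof (H x ltac:(unfold in_I; lra)) as Hl; rewrite limit1_in_eps in Hl.
    destruct (Hl eps He) as [alp [Ha H']].
    set (w := Rmin alp (Rmin (x - a) (b - x))).
    assert (Hw : 0 < w) by (repeat apply Rmin_pos; lra).
    exists (mkposreal _ Hw); simpl; intros k Hk0 Hk.
    assert (w <= alp) by apply Rmin_l.
    assert (w <= x - a) by (eapply Rle_trans; [apply Rmin_r|apply Rmin_l]).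
    assert (w <= b - x) by (eapply Rle_trans; [apply Rmin_r|apply Rmin_r]).
    assert (Ixk : I (x + k)) by (unfold in_I; split_Rabs; lra).
    rewrite !clamp_id; auto; [|unfold in_I; lra].
    replace k with ((x + k) - x) at 2 by ring.
    apply H'; [split; auto; intro E; apply Hk0; lra|].
    replace (x + k - x) with k by ring; lra.
  - intros x _; apply continuity_clamp, (deriv_continuous F d); auto.
  - rewrite !clamp_id in E; auto.
    rewrite Rmin_left in Hc by lra; rewrite Rmax_right in Hc by lra.
    exists c; split; auto; destruct Hy, Hz; unfold in_I; lra.
Qed.

Lemma deriv_near_one_increments F d e : deriv_on a b F d ->
  (forall x, I x -> Rabs (d x - 1) <= e) ->
  forall y z, I y -> I z -> Rabs ((F z - F y) - (z - y)) <= e * Rabs (z - y).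
Proof.
  intros H Hd.
  assert (K : forall y z, I y -> I z -> y < z ->
            Rabs ((F z - F y) - (z - y)) <= e * Rabs (z - y)).
  { intros y z Hy Hz Hyz; destruct (mvt_I F d y z H Hy Hz Hyz) as [c [Hc E]].
    rewrite E; replace (d c * (z - y) - (z - y)) with ((d c - 1) * (z - y)) by ring.
    rewrite Rabs_mult; apply Rmult_le_compat_r; [apply Rabs_pos|auto]. }
  intros y z Hy Hz; destruct (Rtotal_order y z) as [Hl|[Heq|Hg]].
  - auto.
  - subst; rewrite !Rminus_diag, Rabs_R0; lra.
  - specialize (K z y Hz Hy Hg).
    replace (F z - F y - (z - y)) with (- (F y - F z - (y - z))) by ring.
    replace (z - y) with (- (y - z)) by ring; rewrite !Rabs_Ropp; auto.
Qed.

Lemma increments_near_one_deriv F d e : deriv_on a b F d ->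
  (forall y z, I y -> I z -> Rabs ((F z - F y) - (z - y)) <= e * Rabs (z - y)) ->
  forall x, I x -> Rabs (d x - 1) <= e.
Proof.
  intros H B x Hx.
  assert (Q : forall y, punctured x y -> 1 - e <= (F y - F x) / (y - x) <= 1 + e).
  { intros y [Hy Hne]; specialize (B x y Hx Hy).
    set (q := (F y - F x) / (y - x)).
    assert (E : F y - F x = q * (y - x)) by (unfold q; field; intro; apply Hne; lra).
    rewrite E in B.
    replace (q * (y - x) - (y - x)) with ((q - 1) * (y - x)) in B by ring.
    rewrite Rabs_mult in B.
    assert (0 < Rabs (y - x)) by (apply Rabs_pos_lt; intro; apply Hne; lra).
    assert (Rabs (q - 1) <= e) by nra.
    split_Rabs; lra. }
  assert (A1 : 1 - e <= d x).
  { apply (limit1_in_lower (fun y => (F y - F x) / (y - x)) (punctured x) _ x).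
    - intros y Hy; apply Q; auto.
    - apply adh_punctured; auto.
    - apply H; auto. }
  assert (A2 : d x <= 1 + e).
  { apply (limit1_in_upper (fun y => (F y - F x) / (y - x)) (punctured x) _ x).
    - intros y Hy; apply Q; auto.
    - apply adh_punctured; auto.
    - apply H; auto. }
  split_Rabs; lra.
Qed.

Lemma cont_on_bounded2 f1 f2 : cont_on f1 -> cont_on f2 ->
  exists M, 0 <= M /\ forall x, I x -> Rabs (f1 x) <= M /\ Rabs (f2 x) <= M.
Proof.
  intros H1 H2.
  set (F := fun u => Rabs (f1 (clamp u)) + Rabs (f2 (clamp u))).
  assert (C : forall c, a <= c <= b -> continuity_pt F c).
  { intros c _.
    assert (A1 : continuity_pt (comp Rabs (fun u => f1 (clamp u))) c)
      by (apply continuity_pt_comp; [apply continuity_clamp; auto | apply Rcontinuity_abs]).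
    assert (A2 : continuity_pt (comp Rabs (fun u => f2 (clamp u))) c)
      by (apply continuity_pt_comp; [apply continuity_clamp; auto | apply Rcontinuity_abs]).
    exact (continuity_pt_plus _ _ c A1 A2). }
  destruct (continuity_ab_maj F a b (Rlt_le _ _ hab) C) as [Mx [HM _]].
  exists (F Mx); split.
  - unfold F; pose proof (Rabs_pos (f1 (clamp Mx))); pose proof (Rabs_pos (f2 (clamp Mx))); lra.
  - intros x Hx; specialize (HM x Hx); unfold F in HM; rewrite clamp_id in HM; auto.
    pose proof (Rabs_pos (f1 x)); pose proof (Rabs_pos (f2 x)); unfold F; split; lra.
Qed.

Lemma cont_on_pos_lower_bound f : cont_on f -> (forall x, I x -> 0 < f x) ->
  exists m, 0 < m /\ forall x, I x -> m <= f x.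
Proof.
  intros Hc Hpos.
  destruct (continuity_ab_min (fun u => f (clamp u)) a b (Rlt_le _ _ hab)) as [mx [Hmx Imx]].
  { intros c _; apply continuity_clamp; auto. }
  rewrite clamp_id in Hmx by exact Imx.
  exists (f mx); split; [apply Hpos; exact Imx|].
  intros x Hx; specialize (Hmx x Hx); rewrite clamp_id in Hmx; auto.
Qed.

Lemma diff_deriv h : Diff1p a b h -> exists d, deriv_on a b h d /\ cont_on d.
Proof. intros [[hi [_ [H _]]] _]; exact H. Qed.

Lemma diff_maps_I h : Diff1p a b h -> forall x, I x -> I (h x).
Proof. intros [[hi [Hi _]] _] x Hx; apply (Hi x Hx). Qed.

Lemma diff_increasing h : Diff1p a b h -> increasing_on h.
Proof. intros [_ H]; exact H. Qed.

Lemma increasing_inj h : increasing_on h -> forall x y, I x -> I y -> h x = h y -> x = y.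
Proof.
  intros H x y Hx Hy E; destruct (Rtotal_order x y) as [l|[e|g]]; auto.
  - pose proof (H x y Hx Hy l); lra.
  - pose proof (H y x Hy Hx g); lra.
Qed.

Lemma inverse_inj h hi : inverse_on a b h hi -> forall x y, I x -> I y -> hi x = hi y -> x = y.
Proof.
  intros H x y Hx Hy E.
  destruct (H x Hx) as [_ [_ [E1 _]]]; destruct (H y Hy) as [_ [_ [E2 _]]].
  rewrite <- E1, <- E2, E; auto.
Qed.

Lemma inverse_agree h hi fi : inverse_on a b h hi -> inverse_on a b h fi ->
  forall x, I x -> hi x = fi x.
Proof.
  intros H1 H2 x Hx.
  destruct (H1 x Hx) as [_ [Hu [E1 _]]].
  destruct (H2 (hi x) Hu) as [_ [_ [_ E2]]].
  rewrite <- E2 at 1; rewrite E1; auto.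
Qed.

Lemma inverse_deriv_exists h hi : Diff1p a b h -> inverse_on a b h hi ->
  exists d, deriv_on a b hi d.
Proof.
  intros [[fi [Hfi [_ [d [Hd _]]]]] _] Hhi; exists d.
  apply deriv_ext with fi; auto.
  intros x Hx; symmetry; apply (inverse_agree h hi fi); auto.
Qed.

(* Elements of Diff^1_+(I) have positive derivative: it is nonnegative since
   h increases, and nonzero by the chain rule applied to h^-1 o h = id. *)
Lemma diff_deriv_pos h d : Diff1p a b h -> deriv_on a b h d -> forall x, I x -> 0 < d x.
Proof.
  intros Hh Hd x Hx.
  pose proof Hh as [[fi [Hfi [_ [dfi [Hdfi _]]]]] Hincr].
  assert (C : deriv_on a b (fun y => fi (h y)) (fun y => dfi (h y) * d y)).
  { apply deriv_comp; auto; [apply diff_maps_I; auto | apply increasing_inj; auto]. }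
  apply (deriv_ext _ (fun y => y)) in C; [| intros y Hy; apply (Hfi y Hy)].
  pose proof (deriv_unique _ _ _ C deriv_id x Hx) as E; simpl in E.
  assert (Hne : d x <> 0) by (intro Z; rewrite Z in E; lra).
  assert (0 <= d x); [|lra].
  apply (limit1_in_lower (fun y => (h y - h x) / (y - x)) (punctured x) _ x);
    [| apply adh_punctured; auto | apply Hd; auto].
  intros y [Hy Hyx].
  set (q := (h y - h x) / (y - x)).
  assert (E2 : h y - h x = q * (y - x)) by (unfold q; field; intro; apply Hyx; lra).
  destruct (Rtotal_order y x) as [l|[e|g]]; [| tauto |].
  - pose proof (Hincr y x Hy Hx l); nra.
  - pose proof (Hincr x y Hx Hy g); nra.
Qed.

Lemma diff_fix_a h : Diff1p a b h -> h a = a.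
Proof.
  intros Hh; pose proof Hh as [[fi [Hfi _]] Hincr].
  assert (Ia : I a) by (unfold in_I; lra).
  destruct (Hfi a Ia) as [[Ha1 Ha2] [[Hu1 Hu2] [E _]]].
  destruct Hu1 as [Hu1|Hu1].
  - pose proof (Hincr a (fi a) Ia (conj (Rlt_le _ _ Hu1) Hu2) Hu1); lra.
  - rewrite Hu1 at 1; exact E.
Qed.

Lemma diff_fix_b h : Diff1p a b h -> h b = b.
Proof.
  intros Hh; pose proof Hh as [[fi [Hfi _]] Hincr].
  assert (Ib : I b) by (unfold in_I; lra).
  destruct (Hfi b Ib) as [[Hb1 Hb2] [[Hu1 Hu2] [E _]]].
  destruct Hu2 as [Hu2|Hu2].
  - pose proof (Hincr (fi b) b (conj Hu1 (Rlt_le _ _ Hu2)) Ib Hu2); lra.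
  - rewrite <- Hu2 at 1; exact E.
Qed.

Lemma pos_deriv_increasing H dH : deriv_on a b H dH -> (forall x, I x -> 0 < dH x) ->
  increasing_on H.
Proof.
  intros HdH Hpos x y Hx Hy Hxy.
  destruct (mvt_I H dH x y HdH Hx Hy Hxy) as [c [Hc E]].
  specialize (Hpos c Hc); nra.
Qed.

Lemma increasing_fix_maps_I H : increasing_on H -> H a = a -> H b = b ->
  forall x, I x -> I (H x).
Proof.
  intros Hincr Ha Hb x [Hx1 Hx2].
  assert (Ia : I a) by (unfold in_I; lra). assert (Ib : I b) by (unfold in_I; lra).
  split.
  - destruct Hx1 as [Hx1|Hx1]; [|subst; lra].
    pose proof (Hincr a x Ia (conj (Rlt_le _ _ Hx1) Hx2) Hx1); lra.
  - destruct Hx2 as [Hx2|Hx2]; [|subst; lra].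
    pose proof (Hincr x b (conj Hx1 (Rlt_le _ _ Hx2)) Ib Hx2); lra.
Qed.

(* By the intermediate value theorem, such a map is onto I, hence invertible on I. *)
Lemma increasing_inverse_exists H : cont_on H -> increasing_on H -> H a = a -> H b = b ->
  exists HI, inverse_on a b H HI.
Proof.
  intros Hcont Hincr Ha Hb.
  assert (Onto : forall y, exists z, I y -> I z /\ H z = y).
  { intros y.
    destruct (Rle_dec a y) as [Hy1|Hy1]; [|exists 0; intro Hy; destruct Hy; lra].
    destruct (Rle_dec y b) as [Hy2|Hy2]; [|exists 0; intro Hy; destruct Hy; lra].
    assert (Cf : continuity (fun u => H (clamp u) - y)).
    { intro x; apply continuity_pt_minus;
        [apply continuity_clamp; auto | apply continuity_pt_const; intros u v; auto]. }
    destruct (IVT_cor _ a b Cf (Rlt_le _ _ hab)) as [z [Hz E]].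
    - rewrite !clamp_id by (unfold in_I; lra). rewrite Ha, Hb. nra.
    - exists z; intros _; split; auto. rewrite clamp_id in E; auto; lra. }
  destruct (choice (fun y z => I y -> I z /\ H z = y) Onto) as [HI HHI].
  exists HI; intros x Hx; destruct (HHI x Hx) as [Hz Ez].
  pose proof (increasing_fix_maps_I H Hincr Ha Hb x Hx) as Hhx.
  split; [exact Hhx|split; [exact Hz|split; [exact Ez|]]].
  destruct (HHI (H x) Hhx) as [Hz' Ez'].
  apply (increasing_inj H Hincr); auto.
Qed.

Lemma deriv_lower_bound_expansion H dH m : deriv_on a b H dH -> 0 <= m ->
  (forall x, I x -> m <= dH x) ->
  forall u v, I u -> I v -> m * Rabs (v - u) <= Rabs (H v - H u).
Proof.
  intros HdH Hm Hmle.
  assert (K : forall u v, I u -> I v -> u < v -> m * Rabs (v - u) <= Rabs (H v - H u)).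
  { intros u v Hu Hv Huv; destruct (mvt_I H dH u v HdH Hu Hv Huv) as [c [Hc E]].
    specialize (Hmle c Hc).
    rewrite E, Rabs_mult, (Rabs_right (dH c)) by lra.
    apply Rmult_le_compat_r; [apply Rabs_pos| exact Hmle]. }
  intros u v Hu Hv; destruct (Rtotal_order u v) as [l'|[e|g]].
  - auto.
  - subst; rewrite !Rminus_diag, Rabs_R0; lra.
  - specialize (K v u Hv Hu g).
    rewrite <- (Rabs_Ropp (v - u)), <- (Rabs_Ropp (H v - H u)).
    replace (- (v - u)) with (u - v) by ring; replace (- (H v - H u)) with (H u - H v) by ring.
    exact K.
Qed.

(* The inverse of a map expanding distances by m > 0 is (1/m)-Lipschitz, hence continuous. *)
Lemma inverse_cont_on H HI m : inverse_on a b H HI -> 0 < m ->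
  (forall u v, I u -> I v -> m * Rabs (v - u) <= Rabs (H v - H u)) -> cont_on HI.
Proof.
  intros Hinv Hm Hexp y Hy; rewrite limit1_in_eps; intros eps He.
  exists (eps * m); split; [nra|].
  intros z Hz Hzy.
  destruct (Hinv y Hy) as [_ [Iy [Ey _]]]; destruct (Hinv z Hz) as [_ [Iz [Ez _]]].
  specialize (Hexp (HI y) (HI z) Iy Iz); rewrite Ey, Ez in Hexp.
  apply Rmult_lt_reg_l with m; auto; lra.
Qed.

Lemma inverse_deriv H dH HI : deriv_on a b H dH -> (forall x, I x -> 0 < dH x) ->
  inverse_on a b H HI -> cont_on HI -> deriv_on a b HI (fun y => / dH (HI y)).
Proof.
  intros HdH Hpos Hinv HIc y Hy.
  destruct (Hinv y Hy) as [_ [Iy [Ey _]]].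
  assert (C : limit1_in HI (punctured y) (HI y) y)
    by (apply (limit1_in_subdomain _ I); [intros z [Hz _]; auto| auto]).
  pose proof (limit_comp HI (fun v => (H v - H (HI y)) / (v - HI y)) (punctured y)
    (punctured (HI y)) _ _ y C (HdH (HI y) Iy)) as L.
  apply limit_inv in L; [| apply Rgt_not_eq, Hpos; auto].
  assert (Hne : forall z, punctured y z -> HI z <> HI y).
  { intros z [Hz Hzy] E; apply Hzy; apply (inverse_inj H HI Hinv); auto. }
  apply (limit1_in_subdomain _ _ (punctured y)) in L.
  2:{ intros z Hz; split; [exact Hz|]. split; [apply Hinv, Hz | apply Hne, Hz]. }
  eapply limit1_in_ext; [| exact L].
  intros z Hz; simpl; pose proof (Hne z Hz) as Hz'; destruct Hz as [Hz Hzy].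
  destruct (Hinv z Hz) as [_ [Iz [Ez _]]].
  rewrite Ey, Ez; field; split; intro E; [apply Hzy | apply Hz']; lra.
Qed.

Lemma pos_deriv_diff H dH : deriv_on a b H dH -> cont_on dH -> (forall x, I x -> 0 < dH x) ->
  H a = a -> H b = b -> Diff1p a b H.
Proof.
  intros HdH HcH Hpos Ha Hb.
  pose proof (pos_deriv_increasing H dH HdH Hpos) as Hincr.
  destruct (increasing_inverse_exists H (deriv_continuous H dH HdH) Hincr Ha Hb) as [HI Hinv].
  destruct (cont_on_pos_lower_bound dH HcH Hpos) as [m [Hm Hmle]].
  assert (HIc : cont_on HI).
  { apply (inverse_cont_on H HI m); auto.
    apply (deriv_lower_bound_expansion H dH); auto; lra. }
  split; [|exact Hincr].
  exists HI; split; [exact Hinv|split; [exists dH; auto|]].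
  exists (fun y => / dH (HI y)); split; [apply (inverse_deriv H dH); auto|].
  intros y Hy; destruct (Hinv y Hy) as [_ [Iy _]].
  pose proof (limit_comp HI dH I I _ _ y (HIc y Hy) (HcH (HI y) Iy)) as L.
  apply limit_inv in L; [| apply Rgt_not_eq, Hpos; auto].
  eapply limit1_in_subdomain; [| exact L].
  intros z Hz; split; auto; apply Hinv; auto.
Qed.

Lemma convex_comb_diff h0 h1 l : Diff1p a b h0 -> Diff1p a b h1 -> 0 <= l <= 1 ->
  Diff1p a b (convex_comb h0 h1 l).
Proof.
  intros D0 D1 Hl.
  destruct (diff_deriv h0 D0) as [d0 [Hd0 Hc0]].
  destruct (diff_deriv h1 D1) as [d1 [Hd1 Hc1]].
  apply (pos_deriv_diff _ (convex_comb d0 d1 l)).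
  - apply deriv_convex_comb; auto.
  - apply cont_convex_comb; auto.
  - intros x Hx; apply convex_comb_pos;
      [apply (diff_deriv_pos h0) | apply (diff_deriv_pos h1) | ]; auto.
  - unfold convex_comb; cbv beta; rewrite (diff_fix_a h0 D0), (diff_fix_a h1 D1); ring.
  - unfold convex_comb; cbv beta; rewrite (diff_fix_b h0 D0), (diff_fix_b h1 D1); ring.
Qed.

(* Conjugation estimates.  The C^1 distance from h g h^-1 to the identity is
   controlled by the following two inequalities on h and g. *)
Definition conj_close (h g : R -> R) (e : R) : Prop :=
  (forall u, I u -> Rabs (h (g u) - h u) <= e) /\
  (forall u v, I u -> I v ->
     Rabs ((h (g v) - h (g u)) - (h v - h u)) <= e * Rabs (h v - h u)).

(* C^1-closeness of h g h^-1 to id gives conj_close, by evaluating at h u and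
   by the mean value theorem. *)
Lemma conj_close_of_C1_close h hi g e : Diff1p a b h -> inverse_on a b h hi -> Diff1p a b g ->
  C1_close a b (fun x => h (g (hi x))) (fun x => x) e -> conj_close h g e.
Proof.
  intros Dh Hhi Dg Hc.
  destruct (inverse_deriv_exists h hi Dh Hhi) as [dhi Hdhi].
  destruct (diff_deriv g Dg) as [dg [Hdg _]].
  destruct (diff_deriv h Dh) as [dh [Hdh _]].
  assert (Hhi_I : forall x, I x -> I (hi x)) by (intros x Hx; apply (Hhi x Hx)).
  assert (Dghi : deriv_on a b (fun x => g (hi x)) (fun x => dg (hi x) * dhi x)).
  { apply deriv_comp; auto. apply inverse_inj with h; auto. }
  assert (Dconj := deriv_comp _ _ _ _ Dghi Hdh).
  specialize (Dconj (fun x Hx => diff_maps_I g Dg (hi x) (Hhi_I x Hx))).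
  specialize (Dconj (fun x y Hx Hy E => inverse_inj h hi Hhi x y Hx Hy
                      (increasing_inj g (diff_increasing g Dg) _ _ (Hhi_I x Hx) (Hhi_I y Hy) E))).
  specialize (Hc _ _ Dconj deriv_id).
  assert (Key : forall u, I u -> h (g (hi (h u))) = h (g u)).
  { intros u Hu; destruct (Hhi u Hu) as [_ [_ [_ E]]]; rewrite E; auto. }
  split.
  - intros u Hu; destruct (Hc (h u) (diff_maps_I h Dh u Hu)) as [H1 _].
    rewrite Key in H1; auto; lra.
  - intros u v Hu Hv.
    rewrite <- (Key u Hu), <- (Key v Hv).
    apply (deriv_near_one_increments _ _ e Dconj); try (apply diff_maps_I; auto).
    intros x Hx; left; apply (Hc x Hx).
Qed.

Lemma convex_relative_bound l e A0 B0 A1 B1 : 0 <= l <= 1 ->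
  Rabs (A0 - B0) <= e * Rabs B0 -> Rabs (A1 - B1) <= e * Rabs B1 ->
  (0 <= B0 /\ 0 <= B1) \/ (B0 <= 0 /\ B1 <= 0) ->
  Rabs ((A0 + l * (A1 - A0)) - (B0 + l * (B1 - B0))) <= e * Rabs (B0 + l * (B1 - B0)).
Proof.
  intros Hl H0 H1 Hs.
  replace ((A0 + l * (A1 - A0)) - (B0 + l * (B1 - B0)))
    with ((1 - l) * (A0 - B0) + l * (A1 - B1)) by ring.
  eapply Rle_trans; [apply Rabs_triang|].
  rewrite !Rabs_mult, (Rabs_right (1 - l)), (Rabs_right l) by lra.
  assert (E : Rabs (B0 + l * (B1 - B0)) = (1 - l) * Rabs B0 + l * Rabs B1).
  { replace (B0 + l * (B1 - B0)) with ((1 - l) * B0 + l * B1) by ring.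
    destruct Hs as [[P0 P1]|[P0 P1]].
    - rewrite !Rabs_right; nra.
    - rewrite Rabs_left1, (Rabs_left1 B0), (Rabs_left1 B1); nra. }
  rewrite E.
  assert ((1 - l) * Rabs (A0 - B0) <= (1 - l) * (e * Rabs B0)) by (apply Rmult_le_compat_l; lra).
  assert (l * Rabs (A1 - B1) <= l * (e * Rabs B1)) by (apply Rmult_le_compat_l; lra).
  lra.
Qed.

Lemma conj_close_convex_comb h0 h1 g l e : increasing_on h0 -> increasing_on h1 ->
  0 <= l <= 1 -> conj_close h0 g e -> conj_close h1 g e ->
  conj_close (convex_comb h0 h1 l) g e.
Proof.
  intros I0 I1 Hl [P0 Q0] [P1 Q1]; unfold convex_comb; split.
  - intros u Hu; specialize (P0 u Hu); specialize (P1 u Hu).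
    replace (h0 (g u) + l * (h1 (g u) - h0 (g u)) - (h0 u + l * (h1 u - h0 u)))
      with ((1 - l) * (h0 (g u) - h0 u) + l * (h1 (g u) - h1 u)) by ring.
    eapply Rle_trans; [apply Rabs_triang|].
    rewrite !Rabs_mult, (Rabs_right (1 - l)), (Rabs_right l) by lra.
    assert ((1 - l) * Rabs (h0 (g u) - h0 u) <= (1 - l) * e) by (apply Rmult_le_compat_l; lra).
    assert (l * Rabs (h1 (g u) - h1 u) <= l * e) by (apply Rmult_le_compat_l; lra).
    lra.
  - intros u v Hu Hv.
    replace (h0 (g v) + l * (h1 (g v) - h0 (g v)) - (h0 (g u) + l * (h1 (g u) - h0 (g u))))
      with ((h0 (g v) - h0 (g u)) + l * ((h1 (g v) - h1 (g u)) - (h0 (g v) - h0 (g u))))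
      by ring.
    replace (h0 v + l * (h1 v - h0 v) - (h0 u + l * (h1 u - h0 u)))
      with ((h0 v - h0 u) + l * ((h1 v - h1 u) - (h0 v - h0 u))) by ring.
    apply convex_relative_bound; auto.
    destruct (Rtotal_order u v) as [lt|[eq|gt]].
    + left; pose proof (I0 u v Hu Hv lt); pose proof (I1 u v Hu Hv lt); lra.
    + left; subst; lra.
    + right; pose proof (I0 v u Hv Hu gt); pose proof (I1 v u Hv Hu gt); lra.
Qed.

(* Conversely, conj_close H g e gives C^1-closeness of H g H^-1 to id at any
   scale eps > e (the derivative bound comes from the increments). *)
Lemma C1_close_of_conj_close H HI g e eps : inverse_on a b H HI ->
  conj_close H g e -> e < eps -> C1_close a b (fun x => H (g (HI x))) (fun x => x) eps.
Proof.
  intros Hinv [P Q] He df dg Hdf Hdg x Hx; cbv beta.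
  rewrite (deriv_unique _ _ _ Hdg deriv_id x Hx).
  split.
  - destruct (Hinv x Hx) as [_ [Iu [Eu _]]].
    specialize (P (HI x) Iu); rewrite Eu in P; lra.
  - assert (B : Rabs (df x - 1) <= e); [|lra].
    apply (increments_near_one_deriv _ df e Hdf); auto.
    intros y z Hy Hz.
    destruct (Hinv y Hy) as [_ [Iv [Ev _]]]; destruct (Hinv z Hz) as [_ [Iw [Ew _]]].
    specialize (Q (HI y) (HI z) Iv Iw); rewrite Ev, Ew in Q; exact Q.
Qed.

End Segment.

Definition flr (r : R) : nat := Z.to_nat (Int_part r).

Lemma flr_spec r : 0 <= r -> INR (flr r) <= r < INR (flr r) + 1.
Proof.
  intros Hr; destruct (base_Int_part r) as [H1 H2].
  assert (Hz : (0 <= Int_part r)%Z) by (assert (-1 < Int_part r)%Z by (apply lt_IZR; lra); lia).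
  unfold flr; rewrite INR_IZR_INZ, Z2Nat.id by exact Hz; lra.
Qed.

Lemma flr_eq n r : INR n <= r < INR n + 1 -> flr r = n.
Proof.
  intros Hn; pose proof (flr_spec r ltac:(pose proof (pos_INR n); lra)) as Hm.
  destruct (lt_eq_lt_dec (flr r) n) as [[lt|eq]|gt]; auto.
  - assert (INR (S (flr r)) <= INR n) by (apply le_INR; lia); rewrite S_INR in *; lra.
  - assert (INR (S n) <= INR (flr r)) by (apply le_INR; lia); rewrite S_INR in *; lra.
Qed.

Definition interp_path (h : nat -> R -> R) (r : R) : R -> R :=
  convex_comb (h (flr r)) (h (S (flr r))) (r - INR (flr r)).

Lemma interp_path_seg h m r : INR m <= r <= INR m + 1 ->
  forall x, interp_path h r x = convex_comb (h m) (h (S m)) (r - INR m) x.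
Proof.
  intros [H1 H2] x; unfold interp_path, convex_comb; destruct H2 as [H2|H2].
  - rewrite (flr_eq m r); auto.
  - rewrite (flr_eq (S m) r); [| rewrite S_INR; lra].
    rewrite S_INR, H2; ring.
Qed.

Lemma interp_path_seg_bound h x m c r r' : Rabs (h (S m) x - h m x) <= c ->
  INR m <= r <= INR m + 1 -> INR m <= r' <= INR m + 1 ->
  Rabs (interp_path h r x - interp_path h r' x) <= c * Rabs (r - r').
Proof.
  intros Hc Hr Hr'.
  rewrite (interp_path_seg h m r Hr x), (interp_path_seg h m r' Hr' x); unfold convex_comb.
  replace (h m x + (r - INR m) * (h (S m) x - h m x) - (h m x + (r' - INR m) * (h (S m) x - h m x)))
    with ((r - r') * (h (S m) x - h m x)) by ring.
  rewrite Rabs_mult, Rmult_comm; apply Rmult_le_compat_r; [apply Rabs_pos|auto].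
Qed.

Lemma interp_path_two_seg_bound h x m c0 c1 r r' : 0 <= c0 -> 0 <= c1 ->
  Rabs (h (S m) x - h m x) <= c0 -> Rabs (h (S (S m)) x - h (S m) x) <= c1 ->
  INR m <= r' <= INR m + 1 -> INR m + 1 <= r <= INR m + 2 ->
  Rabs (interp_path h r x - interp_path h r' x) <= (c0 + c1) * (r - r').
Proof.
  intros Hc0 Hc1 B0 B1 Hr' Hr.
  assert (Q1 : Rabs (interp_path h r x - interp_path h (INR m + 1) x) <= c1 * Rabs (r - (INR m + 1))).
  { apply (interp_path_seg_bound h x (S m)); auto; rewrite S_INR; lra. }
  assert (Q0 : Rabs (interp_path h (INR m + 1) x - interp_path h r' x) <= c0 * Rabs (INR m + 1 - r')).
  { apply (interp_path_seg_bound h x m); auto; lra. }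
  rewrite (Rabs_right (r - (INR m + 1))) in Q1 by lra.
  rewrite (Rabs_right (INR m + 1 - r')) in Q0 by lra.
  replace (interp_path h r x - interp_path h r' x) with
    ((interp_path h r x - interp_path h (INR m + 1) x) + (interp_path h (INR m + 1) x - interp_path h r' x))
    by ring.
  eapply Rle_trans; [apply Rabs_triang|].
  assert (c1 * (r - (INR m + 1)) <= c1 * (r - r')) by (apply Rmult_le_compat_l; lra).
  assert (c0 * (INR m + 1 - r') <= c0 * (r - r')) by (apply Rmult_le_compat_l; lra).
  lra.
Qed.

(* The path is Lipschitz on [r0 - 1, r0 + 1], with constant the sum of the
   slopes of the (at most three) segments meeting this window. *)
Lemma interp_path_lipschitz (h : nat -> R -> R) (K : nat -> R) x :
  (forall n, 0 <= K n /\ Rabs (h (S n) x - h n x) <= K n) ->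
  forall r0 r, 0 <= r0 -> 0 <= r -> Rabs (r - r0) < 1 ->
  Rabs (interp_path h r x - interp_path h r0 x)
    <= (K (pred (flr r0)) + K (flr r0) + K (S (flr r0))) * Rabs (r - r0).
Proof.
  intros HK r0 r H0 Hr Hd.
  pose proof (flr_spec r0 H0) as Hs.
  set (n := flr r0) in *.
  pose proof (HK (pred n)) as [K1 B1]; pose proof (HK n) as [K2 B2];
    pose proof (HK (S n)) as [K3 B3].
  pose proof (Rabs_pos (r - r0)) as Ha.
  assert (Hpred : 0 <= K (pred n) * Rabs (r - r0)) by (apply Rmult_le_pos; lra).
  destruct (Rle_dec (INR n) r) as [L1|L1]; [destruct (Rle_dec r (INR n + 1)) as [L2|L2]|].
  - eapply Rle_trans; [apply (interp_path_seg_bound h x n (K n)); auto; lra|].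
    assert (0 <= K (S n) * Rabs (r - r0)) by (apply Rmult_le_pos; lra). nra.
  - assert (Habs : Rabs (r - r0) = r - r0) by (apply Rabs_right; lra).
    rewrite Habs in *.
    eapply Rle_trans;
      [apply (interp_path_two_seg_bound h x n (K n) (K (S n))); auto; split_Rabs; lra|].
    lra.
  - destruct n as [|m]; [simpl in L1; lra|].
    simpl pred in *; rewrite S_INR in *.
    assert (Habs : Rabs (r - r0) = r0 - r) by (rewrite Rabs_left1; lra).
    rewrite <- Rabs_Ropp, Ropp_minus_distr, Habs.
    eapply Rle_trans;
      [apply (interp_path_two_seg_bound h x m (K m) (K (S m))); auto; split_Rabs; lra|].
    assert (0 <= K (S (S m)) * (r0 - r)) by (apply Rmult_le_pos; lra).
    lra.
Qed.

Definition reparam (t : R) : R := t / (1 - t).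

Lemma reparam_nonneg t : 0 <= t < 1 -> 0 <= reparam t.
Proof.
  intros Ht; unfold reparam, Rdiv; apply Rmult_le_pos; [lra|].
  left; apply Rinv_0_lt_compat; lra.
Qed.

Lemma reparam_continuous t0 rho : 0 <= t0 < 1 -> 0 < rho -> exists delta, delta > 0 /\
  forall t, 0 <= t < 1 -> Rabs (t - t0) < delta -> Rabs (reparam t - reparam t0) < rho.
Proof.
  intros Ht0 Hrho.
  set (delta := Rmin ((1 - t0) / 2) (rho * ((1 - t0) * (1 - t0)) / 2)).
  assert (Hdel1 : delta <= (1 - t0) / 2) by apply Rmin_l.
  assert (Hdel2 : delta <= rho * ((1 - t0) * (1 - t0)) / 2) by apply Rmin_r.
  exists delta; split.
  { apply Rmin_pos; [lra|]. assert (0 < (1 - t0) * (1 - t0)) by nra.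
    apply Rdiv_lt_0_compat; [nra|lra]. }
  intros t Ht Htt.
  assert (Ht1 : 1 - t > (1 - t0) / 2) by (split_Rabs; lra).
  set (D := (1 - t) * (1 - t0)).
  assert (HD : D > (1 - t0) * (1 - t0) / 2) by (unfold D; nra).
  assert (E : Rabs (reparam t - reparam t0) * D = Rabs (t - t0)).
  { replace (t - t0) with ((reparam t - reparam t0) * D) by (unfold reparam, D; field; lra).
    rewrite Rabs_mult, (Rabs_right D); [reflexivity|unfold D; nra]. }
  apply Rmult_lt_reg_r with D; [nra|]. rewrite E.
  assert (rho * ((1 - t0) * (1 - t0)) / 2 < rho * D) by nra.
  lra.
Qed.

Lemma reparam_large N t : 0 <= t < 1 -> 1 - / (INR N + 1) < t -> INR N < reparam t.
Proof.
  intros Ht Htd; pose proof (pos_INR N).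
  assert (E : reparam t * (1 - t) = t) by (unfold reparam; field; lra).
  assert (E2 : / (INR N + 1) * (INR N + 1) = 1) by (field; lra).
  assert ((INR N + 1) * (1 - t) < 1) by nra.
  destruct (Rlt_or_le (INR N) (reparam t)) as [|Hle]; auto.
  assert (reparam t * (1 - t) <= INR N * (1 - t)) by (apply Rmult_le_compat_r; lra).
  lra.
Qed.

Definition sample (n : nat) : R := 1 - / (INR n + 1).

Lemma sample_range n : 0 <= sample n < 1.
Proof.
  unfold sample; pose proof (pos_INR n).
  assert (0 < / (INR n + 1)) by (apply Rinv_0_lt_compat; lra).
  assert (/ (INR n + 1) * (INR n + 1) = 1) by (field; lra).
  nra.
Qed.

Lemma sample_tends_to_one delta : delta > 0 ->
  exists N, forall n, (N <= n)%nat -> 1 - delta < sample n.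
Proof.
  intros Hd; destruct (INR_unbounded (/ delta)) as [N HN]; exists N; intros n Hn.
  unfold sample; apply le_INR in Hn; pose proof (pos_INR N).
  assert (/ (INR n + 1) < delta); [|lra].
  rewrite <- (Rinv_inv delta); apply Rinv_lt_contravar; [|lra].
  apply Rmult_lt_0_compat; [apply Rinv_0_lt_compat; lra | lra].
Qed.

Section SequenceToPath.
Variables a b : R.
Hypothesis hab : a < b.
Variable h : nat -> R -> R.
Hypothesis h_diff : forall n, Diff1p a b (h n).

Lemma interp_path_diff r : 0 <= r -> Diff1p a b (interp_path h r).
Proof.
  intros Hr; pose proof (flr_spec r Hr).
  apply convex_comb_diff; auto; lra.
Qed.

Lemma interp_path_inverse : exists hinv : R -> R -> R,
  forall t, 0 <= t < 1 -> inverse_on a b (interp_path h (reparam t)) (hinv t).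
Proof.
  apply (choice (fun t HI => 0 <= t < 1 -> inverse_on a b (interp_path h (reparam t)) HI)).
  intros t; destruct (Rle_dec 0 t) as [H1|H1]; [|exists (fun x => x); intros; lra].
  destruct (Rlt_dec t 1) as [H2|H2]; [|exists (fun x => x); intros; lra].
  destruct (interp_path_diff (reparam t) (reparam_nonneg t (conj H1 H2))) as [[HI [Hinv _]] _].
  exists HI; auto.
Qed.

(* r |-> h_r is locally Lipschitz for the C^1 distance: the constant is made
   of uniform bounds for h_(n+1) - h_n and their derivatives. *)
Lemma interp_path_locally_lipschitz r0 : 0 <= r0 -> exists L, 0 <= L /\
  forall r eps, 0 <= r -> Rabs (r - r0) < 1 -> L * Rabs (r - r0) < eps ->
  C1_close a b (interp_path h r) (interp_path h r0) eps.
Proof.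
  intros Hr0.
  destruct (choice (fun n d => deriv_on a b (h n) d /\ cont_on a b d)
              (fun n => diff_deriv a b (h n) (h_diff n))) as [dh Hdh].
  assert (Bn : forall n, exists M, 0 <= M /\ forall x, in_I a b x ->
             Rabs (h (S n) x - h n x) <= M /\ Rabs (dh (S n) x - dh n x) <= M).
  { intros n; apply cont_on_bounded2; auto; intros x Hx; apply limit_minus.
    - apply (deriv_continuous a b _ _ (proj1 (Hdh _))); auto.
    - apply (deriv_continuous a b _ _ (proj1 (Hdh _))); auto.
    - apply Hdh; auto.
    - apply Hdh; auto. }
  destruct (choice _ Bn) as [K HK].
  set (n0 := flr r0).
  exists (K (pred n0) + K n0 + K (S n0)); split.
  { pose proof (proj1 (HK (pred n0))); pose proof (proj1 (HK n0));
      pose proof (proj1 (HK (S n0))); lra. }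
  intros r eps Hr Hrr HL df dg Hdf Hdg x Hx.
  assert (Dpath : forall s, deriv_on a b (interp_path h s) (interp_path dh s))
    by (intros s; apply deriv_convex_comb; apply Hdh).
  rewrite (deriv_unique a b hab _ _ _ Hdf (Dpath r) x Hx),
          (deriv_unique a b hab _ _ _ Hdg (Dpath r0) x Hx).
  split; eapply Rle_lt_trans; try exact HL.
  - apply (interp_path_lipschitz h K x); auto.
    intros n; split; [apply HK | apply (HK n); auto].
  - apply (interp_path_lipschitz dh K x); auto.
    intros n; split; [apply HK | apply (HK n); auto].
Qed.

Lemma interp_path_continuous t0 : 0 <= t0 < 1 -> forall eps, eps > 0 ->
  exists delta, delta > 0 /\ forall t, 0 <= t < 1 -> Rabs (t - t0) < delta ->
    C1_close a b (interp_path h (reparam t)) (interp_path h (reparam t0)) eps.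
Proof.
  intros Ht0 eps He.
  destruct (interp_path_locally_lipschitz (reparam t0) (reparam_nonneg t0 Ht0)) as [L [HL Hlip]].
  set (rho := Rmin 1 (eps / (L + 1))).
  assert (Hrho : 0 < rho) by (apply Rmin_pos; [lra| apply Rdiv_lt_0_compat; lra]).
  assert (Hrho1 : rho <= 1) by apply Rmin_l.
  assert (Hrho2 : rho <= eps / (L + 1)) by apply Rmin_r.
  destruct (reparam_continuous t0 rho Ht0 Hrho) as [delta [Hd Hdelta]].
  exists delta; split; auto; intros t Ht Htt.
  specialize (Hdelta t Ht Htt).
  apply Hlip; [apply reparam_nonneg; auto | lra |].
  assert (L * Rabs (reparam t - reparam t0) <= L * (eps / (L + 1)))
    by (apply Rmult_le_compat_l; lra).
  assert (L * (eps / (L + 1)) = eps - eps / (L + 1)) by (field; lra).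
  assert (0 < eps / (L + 1)) by (apply Rdiv_lt_0_compat; lra).
  lra.
Qed.

Lemma interp_path_conj_close hinv g e N : (forall n, inverse_on a b (h n) (hinv n)) ->
  Diff1p a b g -> 0 < e ->
  (forall n, (N <= n)%nat -> C1_close a b (fun x => h n (g (hinv n x))) (fun x => x) e) ->
  forall r HI, INR N <= r -> inverse_on a b (interp_path h r) HI ->
  C1_close a b (fun x => interp_path h r (g (HI x))) (fun x => x) (2 * e).
Proof.
  intros Hinv Dg He HN r HI Hr HHI.
  assert (Hr0 : 0 <= r) by (pose proof (pos_INR N); lra).
  pose proof (flr_spec r Hr0) as Hs.
  assert (HNn : (N <= flr r)%nat).
  { assert (INR N < INR (S (flr r))) by (rewrite S_INR; lra).
    apply INR_lt in H; lia. }
  apply (C1_close_of_conj_close a b hab _ HI g e); [exact HHI| |lra].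
  apply conj_close_convex_comb; try apply diff_increasing, h_diff; [lra | |].
  - apply (conj_close_of_C1_close a b hab _ (hinv (flr r))); auto.
  - apply (conj_close_of_C1_close a b hab _ (hinv (S (flr r)))); auto.
Qed.

End SequenceToPath.

Theorem theoremt (a b : R) (hab : a < b) (G : (R -> R) -> Prop)
  (HG : subgroup_Diff1p a b G) :
  (exists (h hinv : R -> R -> R),
     (forall t, 0 <= t < 1 -> Diff1p a b (h t) /\ inverse_on a b (h t) (hinv t)) /\
     (forall t0, 0 <= t0 < 1 -> forall eps, eps > 0 -> exists delta, delta > 0 /\
        forall t, 0 <= t < 1 -> Rabs (t - t0) < delta -> C1_close a b (h t) (h t0) eps) /\
     (forall g, G g -> forall eps, eps > 0 -> exists delta, delta > 0 /\
        forall t, 0 <= t < 1 -> 1 - delta < t ->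
          C1_close a b (fun x => h t (g (hinv t x))) (fun x => x) eps))
  <->
  (exists (h hinv : nat -> R -> R),
     (forall n, Diff1p a b (h n) /\ inverse_on a b (h n) (hinv n)) /\
     (forall g, G g -> forall eps, eps > 0 -> exists N : nat,
        forall n, (N <= n)%nat ->
          C1_close a b (fun x => h n (g (hinv n x))) (fun x => x) eps)).
Proof.
  split.
  -
    intros [h [hinv [Hd [_ Hconv]]]].
    exists (fun n => h (sample n)), (fun n => hinv (sample n)); split.
    + intros n; apply Hd, sample_range.
    + intros g Hg eps He.
      destruct (Hconv g Hg eps He) as [delta [Hdelta Hclose]].
      destruct (sample_tends_to_one delta Hdelta) as [N HN].
      exists N; intros n Hn; apply Hclose; [apply sample_range | apply HN; auto].
  -
    intros [h [hinv [Hd Hconv]]].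
    assert (Dh : forall n, Diff1p a b (h n)) by (intro n; apply Hd).
    destruct (interp_path_inverse a b hab h Dh) as [hinvt Hhinvt].
    exists (fun t => interp_path h (reparam t)), hinvt; split; [|split].
    + intros t Ht; split; [apply interp_path_diff, reparam_nonneg | apply Hhinvt]; auto.
    + apply (interp_path_continuous a b hab h Dh).
    + intros g Hg eps He.
      destruct (Hconv g Hg (eps / 2)) as [N HN]; [lra|].
      exists (/ (INR N + 1)); split; [apply Rinv_0_lt_compat; pose proof (pos_INR N); lra|].
      intros t Ht Htd; replace eps with (2 * (eps / 2)) by field.
      apply (interp_path_conj_close a b hab h Dh hinv g (eps / 2) N);
        [intro n; apply Hd | apply (proj1 HG g Hg) | lra | exact HN | | apply Hhinvt; auto].
      apply Rlt_le, reparam_large; auto.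
Qed.
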